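(* Let $n \geq 5$. For the game $\mathcal{G}^s_n$ defined in the context, the classical group broadcast complexity satisfies $B^{\mathrm{cl}}(\mathcal{G}^s_n) \geq \log_2 \log_2 n$, and the quantum group broadcast complexity with respect to the $n$-partite GHZ state $|\Phi\rangle = \frac{1}{\sqrt{2}}(|0\rangle^{\otimes n} + |1\rangle^{\otimes n}) \in \mathcal{H}_1\otimes\cdots\otimes\mathcal{H}_n$ (each $\mathcal{H}_i$ two-dimensional with orthonormal basis $\{|0\rangle,|1\rangle\}$) satisfies $B^{\mathrm{qm}}_{|\Phi\rangle}(\mathcal{G}^s_n) \leq 1$.
   Context: Write $[n]=\{1,\dots,n\}$ and let $\epsilon$ denote the empty string. A game $\mathcal{G}_n$ for $n$ players is a probability distribution over triples $(\sigma,q,W)$, where $\sigma=(G_1,\dots,G_m)$ is a tuple of disjoint sets with union $[n]$ (the groups), $q=(q_1,\dots,q_m)$ is an $m$-tuple of bitstrings (the query), and $W$ is a set of $m$-tuples of bitstrings (allowed answers). Players are arbitrary (possibly probabilistic) information-processing systems with an internal state, producing an output on each new input depending on all inputs so far and the internal state. In a classical strategy the players are classical and their initial internal states $R_1,\dots,R_n$ have an arbitrary joint distribution. In a quantum strategy based on an $n$-partite state $|\Psi\rangle \in \mathcal{H}_1\otimes\cdots\otimes\mathcal{H}_n$, player $P_i$ additionally holds the quantum system $\mathcal{H}_i$, initialized jointly in $|\Psi\rangle$ (plus possibly correlated classical initial data); inputs and outputs remain classical and may depend on outcomes of measurements on $\mathcal{H}_i$. Rules: an instance $(\sigma,q,W)$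 is sampled; player $P_i$ belongs to group $G_k$ if $i\in G_k$. The game proceeds in steps; in step 1 every player in $G_k$ receives $q_k$. In each step each player produces an output which is either sent to the players of his own group or broadcast to all $n$ players, and these outputs are inputs in the next step. If $b_{t,i}$ is the (possibly empty) string broadcast by $P_i$ in step $t$, all players receive $\bar b_t = b_{t,1}\|\cdots\|b_{t,n}$ in step $t+1$, and the strings $\bar b_t$ must be self-delimiting (a player reading $\bar b_t$ bitwise can detect where it ends). The game ends when all players are in a halting state, where at most one player of each group $G_k$ specifies a final output string $a_k$ ($a_k=\epsilon$ if none); the game is won if $(a_1,\dots,a_m)\in W$. The group broadcast complexity of a strategy $\tau$ is $B(\mathcal{G}_n,\tau)=\max\sum_t |\bar b_t|$, the maximum over all randomness of the players and initial states and over all instances of positive probability. $B^{\mathrm{cl}}(\mathcal{G}_n)$ is the minimum of $B(\mathcal{G}_n,\tau)$ over classical strategies $\tau$ winning $\mathcal{G}_n$ with certainty; $B^{\mathrm{qm}}_{|\Psi\rangle}(\mathcal{G}_n)$ is the minimum over quantum strategies based on $|\Psi\rangle$ winning with certainty. The game $\mathcal{G}^s_n$ is the uniform distribution over the triples $(\sigma_{ij}, q_s, W_s)$ for $1\le i<j\le n$, where $\sigma_{ij}=(\{i\},\{j\},[n]\setminus\{i,j\})$, $q_s=(0,0,1)$ and $W_s=\{(0,1,\epsilon),(1,0,\epsilon)\}$. *)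

From HB Require Import structures.
From mathcomp Require Import all_boot all_order all_algebra.
From mathcomp Require Import algC.
From mathcomp Require Import all_classical all_reals all_analysis.
From mathcomp Require Import Rstruct Rstruct_topology.

Unset Printing Implicit Defensive.

Import Order.TTheory GRing.Theory Num.Theory.

Local Open Scope classical_set_scope.

(* bitstrings; the empty string epsilon is [::] *)
Definition bits := seq bool.

(* An instance (sigma, q, W) for n players: the groups G_1..G_m are
   encoded by the map  group_of : [n] -> [m]  (G_k = group_of^-1 k, so
   they are disjoint with union [n]); q_k = query k; W = allowed. *)
Record instance (n : nat) := Instance {
  ngroups : nat;
  group_of : 'I_n -> 'I_ngroups;
  query : 'I_ngroups -> bits;
  allowed : ('I_ngroups -> bits) -> Prop }.
Arguments ngroups {n} _.
Arguments group_of {n} _ _.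
Arguments query {n} _ _.
Arguments allowed {n} _ _.

(* A game is a probability distribution over instances; everything in the
   definitions of B, B^cl, B^qm only depends on its support (instances of
   positive probability), which we record as an indexed family. *)
Record game (n : nat) := Game {
  gidx : Type;
  ginst : gidx -> instance n }.
Arguments gidx {n} _.
Arguments ginst {n} _ _.

Definition gs_group {n : nat} (i j : 'I_n) (p : 'I_n) : 'I_3 :=
  if p == i then @Ordinal 3 0 isT
  else if p == j then @Ordinal 3 1 isT else @Ordinal 3 2 isT.

Definition gs_query (k : 'I_3) : bits :=
  if val k == 2%N then [:: true] else [:: false].

Definition gs_allowed (a : 'I_3 -> bits) : Prop :=
  (a (@Ordinal 3 0 isT) = [:: false] /\ a (@Ordinal 3 1 isT) = [:: true]
     /\ a (@Ordinal 3 2 isT) = [::]) \/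
  (a (@Ordinal 3 0 isT) = [:: true] /\ a (@Ordinal 3 1 isT) = [:: false]
     /\ a (@Ordinal 3 2 isT) = [::]).

Definition gs_instance {n : nat} (i j : 'I_n) : instance n :=
  @Instance n 3 (gs_group i j) gs_query gs_allowed.

Definition game_s (n : nat) : game n :=
  @Game n {p : 'I_n * 'I_n | (p.1 < p.2)%N}
          (fun p => gs_instance (sval p).1 (sval p).2).

(* Output of a player in a step: halt (with optional final output a_k),
   or a string sent either to its own group (Send false s) or broadcast
   to all players (Send true s). *)
Inductive action := Halt of option bits | Send of bool & bits.

(* Input of a player in step t+1: the group messages of step t of the
   members of its group (with their sender), and bbar_t. *)
Definition inp (n : nat) := (seq ('I_n * bits) * bits)%type.

(* configuration: the inputs (after the query) received so far, and the
   status: None = running, Some o = halted with final output o *)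
Record cfg (n : nat) := Cfg { chist : 'I_n -> seq (inp n);
                    cstat : 'I_n -> option (option bits) }.
Arguments Cfg {n} _ _.
Arguments chist {n} _ _.
Arguments cstat {n} _ _.

Section Mechanics.
Context {n : nat}.
Variable (x : instance n).

Definition qry (p : 'I_n) : bits := query x (group_of x p).

(* a i = None iff player i has already halted *)
Definition bcast_part (a : 'I_n -> option action) (i : 'I_n) : bits :=
  if a i is Some (Send true s) then s else [::].

Definition bbar (a : 'I_n -> option action) : bits :=
  flatten [seq bcast_part a i | i <- enum 'I_n].

Definition gmsgs (a : 'I_n -> option action) (p : 'I_n) : seq ('I_n * bits) :=
  pmap (fun i => if group_of x i == group_of x p then
                   (if a i is Some (Send false s) then Some (i, s) else None)
                 else None) (enum 'I_n).


Definition cfg0 : cfg n := Cfg (fun _ => [::]) (fun _ => None).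

Definition cfg_next (c : cfg n) (a : 'I_n -> option action) : cfg n :=
  let st i := if a i is Some (Halt o) then Some o else cstat c i in
  Cfg (fun i => if st i is None then rcons (chist c i) (gmsgs a i, bbar a)
                else chist c i) st.

Definition terminated (c : cfg n) : Prop := forall i, cstat c i <> None.

Definition has_out (o : option (option bits)) : bool :=
  if o is Some (Some _) then true else false.

Definition group_output (c : cfg n) (k : 'I_(ngroups x)) : bits :=
  match [pick i | (group_of x i == k) && has_out (cstat c i)] with
  | Some i => if cstat c i is Some (Some s) then s else [::]
  | None => [::]
  end.

Definition won (c : cfg n) : Prop :=
  (forall i j, group_of x i = group_of x j ->
     has_out (cstat c i) -> has_out (cstat c j) -> i = j) /\
  allowed x (group_output c).

End Mechanics.

(* Omega: the (nonempty) support of the joint distribution of the initial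
   internal states R_1..R_n (player i sees only cs_init w i); a player's
   output in each step is a function of its initial state, its query and
   all inputs so far (local randomness is part of the initial state). *)
Record cstrat (n : nat) := CStrat {
  cs_Omega : Type;
  cs_omega0 : cs_Omega;
  cs_State : Type;
  cs_init : cs_Omega -> 'I_n -> cs_State;
  cs_act : 'I_n -> cs_State -> bits -> seq (inp n) -> action }.
Arguments cs_Omega {n} _.
Arguments cs_State {n} _.
Arguments cs_init {n} _ _ _.
Arguments cs_act {n} _ _ _ _ _.

Section Classical.
Context {n : nat}.
Variables (tau : cstrat n) (x : instance n) (w : cs_Omega tau).

Definition cacts (c : cfg n) : 'I_n -> option action := fun i =>
  if cstat c i is None
  then Some (cs_act tau i (cs_init tau w i) (qry x i) (chist c i)) else None.

Fixpoint crun (t : nat) : cfg n :=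
  if t is t'.+1 then let c := crun t' in cfg_next x c (cacts c) else cfg0.

(* bbar of step t+1 *)
Definition cbcast (t : nat) : bits := bbar (cacts (crun t)).

Definition ccost (T : nat) : nat := \sum_(t < T) size (cbcast t).

End Classical.

Definition cwins {n} (tau : cstrat n) (g : game n) : Prop :=
  forall (e : gidx g) (w : cs_Omega tau), exists T,
    terminated (crun tau (ginst g e) w T) /\
    won (ginst g e) (crun tau (ginst g e) w T).

(* bbar_t is self-delimiting: for every player k still running (reading
   bbar_t), the possible values of bbar_t compatible with k's view are
   prefix-free. *)
Definition cselfdelim {n} (tau : cstrat n) (g : game n) : Prop :=
  forall (k : 'I_n) (t : nat) (e1 e2 : gidx g) (w1 w2 : cs_Omega tau),
    let x1 := ginst g e1 in let x2 := ginst g e2 in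
    cstat (crun tau x1 w1 t.+1) k = None ->
    cstat (crun tau x2 w2 t.+1) k = None ->
    cs_init tau w1 k = cs_init tau w2 k ->
    qry x1 k = qry x2 k ->
    chist (crun tau x1 w1 t) k = chist (crun tau x2 w2 t) k ->
    gmsgs x1 (cacts tau x1 w1 (crun tau x1 w1 t)) k =
      gmsgs x2 (cacts tau x2 w2 (crun tau x2 w2 t)) k ->
    prefix (cbcast tau x1 w1 t) (cbcast tau x2 w2 t) ->
    cbcast tau x1 w1 t = cbcast tau x2 w2 t.

Local Open Scope ereal_scope.

Definition Bc {n} (tau : cstrat n) (g : game n) : \bar Rdefinitions.R :=
  ereal_sup [set z | exists (e : gidx g) (w : cs_Omega tau) (T : nat),
                       z = ((ccost tau (ginst g e) w T)%:R)%:E].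

Definition Bcl {n} (g : game n) : \bar Rdefinitions.R :=
  ereal_inf [set Bc tau g | tau in [set tau : cstrat n | cwins tau g /\ cselfdelim tau g]].

Local Close Scope ereal_scope.

(* n qubits: amplitudes on the computational basis {|b>, b : [n] -> {0,1}} *)
Definition qstate (n : nat) := {ffun 'I_n -> bool} -> algC.

Definition bidx (b : bool) : 'I_2 := if b then ord_max else ord0.

Definition upd {n} (b : {ffun 'I_n -> bool}) (i : 'I_n) (c : bool) :
  {ffun 'I_n -> bool} := [ffun k => if k == i then c else b k].

Definition apply_local {n} (K : 'M[algC]_2) (i : 'I_n) (psi : qstate n) : qstate n :=
  fun b => (\sum_(c : bool) K (bidx (b i)) (bidx c) * psi (upd b i c))%R.

Definition is_instrument (l : seq 'M[algC]_2) : Prop :=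
  (\sum_(K <- l) (map_mx Num.conj K)^T *m K = 1%:M)%R.

Definition qpos {n} (psi : qstate n) : Prop := exists b, psi b != 0%R.

Definition ghz (n : nat) : qstate n := fun b =>
  if [forall i, b i == false] || [forall i, b i] then ((sqrtC 2)^-1)%R else 0%R.

(* In each step a running player applies an instrument on its qubit
   (chosen from its classical view), observes the outcome, and then
   produces its output from its view including all outcomes so far. *)
Record qstrat (n : nat) := QStrat {
  qs_Omega : Type;
  qs_omega0 : qs_Omega;
  qs_State : Type;
  qs_init : qs_Omega -> 'I_n -> qs_State;
  qs_instr : 'I_n -> qs_State -> bits -> seq (inp n) -> seq nat -> seq 'M[algC]_2;
  qs_instr_ok : forall i s q h o, is_instrument (qs_instr i s q h o);
  qs_act : 'I_n -> qs_State -> bits -> seq (inp n) -> seq nat -> action }.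
Arguments qs_Omega {n} _.
Arguments qs_State {n} _.
Arguments qs_init {n} _ _ _.
Arguments qs_instr {n} _ _ _ _ _ _.
Arguments qs_act {n} _ _ _ _ _ _.

Record qcfg (n : nat) := QCfg { qc : cfg n; qouts : 'I_n -> seq nat; qpsi : qstate n }.
Arguments QCfg {n} _ _ _.
Arguments qc {n} _.
Arguments qouts {n} _ _.
Arguments qpsi {n} _ _.

Section Quantum.
Context {n : nat}.
Variables (tau : qstrat n) (psi0 : qstate n) (x : instance n)
          (w : qs_Omega tau) (f : nat -> 'I_n -> nat).
(* f t i = outcome observed by player i in step t+1 (a branch) *)


Definition qrunning (c : qcfg n) (i : 'I_n) : bool :=
  if cstat (qc c) i is None then true else false.

Definition qouts_next (t : nat) (c : qcfg n) : 'I_n -> seq nat := fun i =>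
  if qrunning c i then rcons (qouts c i) (f t i) else qouts c i.

Definition qkraus (t : nat) (c : qcfg n) (i : 'I_n) : 'M[algC]_2 :=
  nth 0%R (qs_instr tau i (qs_init tau w i) (qry x i) (chist (qc c) i) (qouts c i)) (f t i).

Definition qpsi_next (t : nat) (c : qcfg n) : qstate n :=
  foldr (fun i phi => if qrunning c i then apply_local (qkraus t c i) i phi else phi)
        (qpsi c) (enum 'I_n).

Definition qacts (t : nat) (c : qcfg n) : 'I_n -> option action := fun i =>
  if qrunning c i
  then Some (qs_act tau i (qs_init tau w i) (qry x i) (chist (qc c) i) (qouts_next t c i))
  else None.

Fixpoint qrun (t : nat) : qcfg n :=
  if t is t'.+1 then
    let c := qrun t' in
    QCfg (cfg_next x (qc c) (qacts t' c)) (qouts_next t' c) (qpsi_next t' c)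
  else QCfg cfg0 (fun _ => [::]) psi0.

Definition qbcast (t : nat) : bits := bbar (qacts t (qrun t)).

Definition qcost (T : nat) : nat := \sum_(t < T) size (qbcast t).

End Quantum.

(* winning with certainty: on every branch, either the branch has
   probability 0 at some point, or the game terminates and is won *)
Definition qwins {n} (tau : qstrat n) (psi0 : qstate n) (g : game n) : Prop :=
  forall (e : gidx g) (w : qs_Omega tau) (f : nat -> 'I_n -> nat), exists T,
    ~ qpos (qpsi (qrun tau psi0 (ginst g e) w f T)) \/
    (terminated (qc (qrun tau psi0 (ginst g e) w f T)) /\
     won (ginst g e) (qc (qrun tau psi0 (ginst g e) w f T))).

Definition qselfdelim {n} (tau : qstrat n) (psi0 : qstate n) (g : game n) : Prop :=
  forall (k : 'I_n) (t : nat) (e1 e2 : gidx g) (w1 w2 : qs_Omega tau)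
         (f1 f2 : nat -> 'I_n -> nat),
    let x1 := ginst g e1 in let x2 := ginst g e2 in
    let c1 := qrun tau psi0 x1 w1 f1 t in let c2 := qrun tau psi0 x2 w2 f2 t in
    qpos (qpsi (qrun tau psi0 x1 w1 f1 t.+1)) ->
    qpos (qpsi (qrun tau psi0 x2 w2 f2 t.+1)) ->
    cstat (qc (qrun tau psi0 x1 w1 f1 t.+1)) k = None ->
    cstat (qc (qrun tau psi0 x2 w2 f2 t.+1)) k = None ->
    qs_init tau w1 k = qs_init tau w2 k ->
    qry x1 k = qry x2 k ->
    chist (qc c1) k = chist (qc c2) k ->
    qouts_next f1 t c1 k = qouts_next f2 t c2 k ->
    gmsgs x1 (qacts tau x1 w1 f1 t c1) k = gmsgs x2 (qacts tau x2 w2 f2 t c2) k ->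
    prefix (qbcast tau psi0 x1 w1 f1 t) (qbcast tau psi0 x2 w2 f2 t) ->
    qbcast tau psi0 x1 w1 f1 t = qbcast tau psi0 x2 w2 f2 t.

Local Open Scope ereal_scope.

Definition Bq {n} (tau : qstrat n) (psi0 : qstate n) (g : game n) : \bar Rdefinitions.R :=
  ereal_sup [set z | exists (e : gidx g) (w : qs_Omega tau)
                            (f : nat -> 'I_n -> nat) (T : nat),
                       qpos (qpsi (qrun tau psi0 (ginst g e) w f T)) /\
                       z = ((qcost tau psi0 (ginst g e) w f T)%:R)%:E].

Definition Bqm {n} (psi0 : qstate n) (g : game n) : \bar Rdefinitions.R :=
  ereal_inf [set Bq tau psi0 g |
             tau in [set tau : qstrat n | qwins tau psi0 g /\ qselfdelim tau psi0 g]].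

Local Close Scope ereal_scope.

Definition log2 (r : Rdefinitions.R) : Rdefinitions.R := (ln r / ln 2)%R.

From HB Require Import structures.
From mathcomp Require Import all_boot all_order all_algebra.
From mathcomp Require Import algC.
From mathcomp Require Import all_classical all_reals all_analysis.
From mathcomp Require Import Rstruct Rstruct_topology.
From mathcomp Require Import ring.

(* Classically, a member k of the pair receives the same query and no group
   messages in every instance in which it is paired, so its view, and hence its
   output, only depends on the broadcast transcript; self-delimitation ensures
   that two instances whose transcripts are prefixes of a common string look
   the same to k as long as it runs. If every transcript has
   length at most b, padding it to length b turns the players into Boolean
   functions on {0,1}^b, and this map is injective: in the instance {i, j}, the
   functions of i and j disagree on the padded transcript since their outputs
   differ. Hence n <= 2^(2^b).
   Quantumly, the GHZ state lets the n - 2 helpers reduce the problem to one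
   parity bit (see the strategy below), which is the only broadcast. *)

Import Order.TTheory GRing.Theory Num.Theory.

Set Implicit Arguments.
Unset Strict Implicit.

Lemma prefix_catl_total (T : eqType) (p a b r : seq T) :
  prefix (p ++ a) r -> prefix (p ++ b) r -> prefix a b \/ prefix b a.
Proof.
move=> /prefixP [ra ->] /prefixP [rb /eqP]; rewrite -!catA eqseq_cat // eqxx /=.
move=> /eqP eq_tails; rewrite !prefixE.
have [le_ab | /ltnW le_ba] := leqP (size a) (size b).
- left; have := congr1 (take (size a)) eq_tails.
  by rewrite take_size_cat // takel_cat // => <-.
- right; have := congr1 (take (size b)) eq_tails.
  by rewrite takel_cat // take_size_cat // => ->.
Qed.

Lemma pmap_eq_single (T : eqType) (U : Type) (g : T -> option U) (k : T) (s : seq T) :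
  uniq s -> pmap (fun p => if p == k then g p else None) s =
            if k \in s then (if g k is Some u then [:: u] else [::]) else [::].
Proof.
elim: s => //= a s IH /andP [a_s us]; rewrite IH // in_cons.
by case: (eqVneq a k) => [<-|] //=; rewrite (negbTE a_s); case: (g a).
Qed.

Definition paired {n} (i j k : 'I_n) : bool := (k == i) || (k == j).

Section GameS.
Variables (n : nat) (i j : 'I_n).

Lemma gs_group_helper k p : ~~ paired i j k ->
  (gs_group i j p == gs_group i j k) = ~~ paired i j p.
Proof.
rewrite /paired negb_or => /andP [ki kj]; rewrite /gs_group (negbTE ki) (negbTE kj).
by case: (p == i); case: (p == j).
Qed.

Lemma qry_gs k : qry (gs_instance i j) k = if paired i j k then [:: false] else [:: true].
Proof. by rewrite /qry /= /gs_query /gs_group /paired; case: (k == i); case: (k == j). Qed.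

Lemma gmsgs_gs_helper a k : ~~ paired i j k ->
  gmsgs (gs_instance i j) a k =
  pmap (fun p => if ~~ paired i j p then
                   (if a p is Some (Send false s) then Some (p, s) else None)
                 else None) (enum 'I_n).
Proof. by move=> hk; rewrite /gmsgs /=; under eq_pmap => p do rewrite gs_group_helper //. Qed.

Hypothesis neq_ij : i != j.

Lemma gs_group_paired k p : paired i j k ->
  (gs_group i j p == gs_group i j k) = (p == k).
Proof.
case/orP => /eqP ->; rewrite /gs_group ?[j == i]eq_sym ?(negbTE neq_ij) eqxx.
- by case: (p == i); case: (p == j).
- by case: (p =P i) => [->|]; rewrite ?(negbTE neq_ij) //; case: (p == j).
Qed.

Lemma gmsgs_gs_paired a k : paired i j k ->
  gmsgs (gs_instance i j) a k = if a k is Some (Send false s) then [:: (k, s)] else [::].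
Proof.
move=> pk; rewrite /gmsgs /=.
under eq_pmap => p do rewrite gs_group_paired //.
by rewrite pmap_eq_single ?enum_uniq // mem_enum; case: (a k) => // -[] // [].
Qed.

End GameS.

Lemma game_s_neq n (e : gidx (game_s n)) : (sval e).1 != (sval e).2.
Proof. by case: e => [[a b]] /= lt_ab; rewrite -val_eqE ltn_eqF. Qed.

Lemma bbar_none n : bbar (fun _ : 'I_n => None) = [::].
Proof. by rewrite /bbar; elim: (enum 'I_n). Qed.

Section ClassicalRuns.
Variables (n : nat) (tau : cstrat n) (x : instance n) (w : cs_Omega tau).

Definition transcript (T : nat) : bits :=
  flatten [seq cbcast tau x w t | t <- iota 0 T].

Lemma transcriptS T : transcript T.+1 = transcript T ++ cbcast tau x w T.
Proof. by rewrite /transcript -addn1 iotaD map_cat flatten_cat /= cats0. Qed.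

Lemma ccost_transcript T : ccost tau x w T = size (transcript T).
Proof.
elim: T => [|T IH]; first by rewrite /ccost big_ord0.
by rewrite /ccost big_ord_recr /= -/(ccost _ _ _ _) IH transcriptS size_cat.
Qed.

Lemma crun_running_pred t k :
  cstat (crun tau x w t.+1) k = None -> cstat (crun tau x w t) k = None.
Proof. by rewrite /= /cacts; case: (cstat _ k). Qed.

Lemma crun_terminated_stable T : terminated (crun tau x w T) -> forall d,
  crun tau x w (d + T) = crun tau x w T /\ transcript (d + T) = transcript T.
Proof.
move=> termT; have acts_none : cacts tau x w (crun tau x w T) = fun _ => None.
  apply: boolp.funext => k; rewrite /cacts.
  by case E: (cstat _ k) => //; have := termT k; rewrite E.
elim => [|d [IHrun IHtr]] //.
rewrite addSn transcriptS IHtr /cbcast /= IHrun acts_none bbar_none cats0; split=> //.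
move: termT; case: (crun tau x w T) => h st termT /=; congr Cfg.
by apply: boolp.funext => k; case E: (st k) => //; have := termT k; rewrite /= E.
Qed.

End ClassicalRuns.

Lemma group_output_some n (x : instance n) c g s :
  group_output x c g = s -> s != [::] ->
  exists p, group_of x p = g /\ cstat c p = Some (Some s).
Proof.
rewrite /group_output; case: pickP => [p /andP [/eqP gp] | _ ]; last by move=> <-.
by case E: (cstat c p) => [[s'|]|] //= _ <- _; exists p.
Qed.

Section ClassicalLowerBound.
Variables (n : nat) (tau : cstrat n) (w : cs_Omega tau).

Local Notation in_pair e k := (paired (sval e).1 (sval e).2 k).

Local Notation run e t := (crun tau (ginst (game_s n) e) w t).
Local Notation trans e t := (transcript (ginst (game_s n) e) w t).
Local Notation acts e t := (cacts tau (ginst (game_s n) e) w (run e t)).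

Lemma game_s_won_outputs e T : won (ginst (game_s n) e) (run e T) ->
  exists o, cstat (run e T) (sval e).1 = Some (Some [:: o]) /\
            cstat (run e T) (sval e).2 = Some (Some [:: ~~ o]).
Proof.
case=> _; set i := (sval e).1; set j := (sval e).2.
have group0 p : gs_group i j p = @Ordinal 3 0 isT -> p = i.
  by rewrite /gs_group; case: (p =P i) => // _; case: (p == j).
have group1 p : gs_group i j p = @Ordinal 3 1 isT -> p = j.
  by rewrite /gs_group; case: (p =P i) => // _; case: (p =P j).
by case=> [] [out0 [out1 _]];
  have [p [/group0 -> ->]] := group_output_some out0 isT;
  have [q [/group1 -> ->]] := group_output_some out1 isT;
  [exists false | exists true].
Qed.

Hypothesis selfdelim : cselfdelim tau (game_s n).

Lemma paired_bcast_eq e1 e2 k t r : in_pair e1 k -> in_pair e2 k ->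
  cstat (run e1 t.+1) k = None -> cstat (run e2 t.+1) k = None ->
  acts e1 t k = acts e2 t k -> chist (run e1 t) k = chist (run e2 t) k ->
  trans e1 t = trans e2 t ->
  prefix (trans e1 t.+1) r -> prefix (trans e2 t.+1) r ->
  cbcast tau (ginst (game_s n) e1) w t = cbcast tau (ginst (game_s n) e2) w t.
Proof.
move=> p1 p2 run1 run2 acts12 hist12 tr12; rewrite !transcriptS tr12.
have msgs12 : gmsgs (ginst (game_s n) e1) (acts e1 t) k =
              gmsgs (ginst (game_s n) e2) (acts e2 t) k.
  by rewrite !gmsgs_gs_paired ?game_s_neq // acts12.
have qry12 : qry (ginst (game_s n) e1) k = qry (ginst (game_s n) e2) k.
  by rewrite !qry_gs p1 p2.
move=> pr1 pr2; case: (prefix_catl_total pr1 pr2) => pr.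
- exact: selfdelim run1 run2 erefl qry12 hist12 msgs12 pr.
- exact/esym/(selfdelim run2 run1 erefl (esym qry12) (esym hist12) (esym msgs12) pr).
Qed.

Lemma paired_view_eq e1 e2 k r t : in_pair e1 k -> in_pair e2 k ->
  prefix (trans e1 t) r -> prefix (trans e2 t) r ->
  [/\ cstat (run e1 t) k = cstat (run e2 t) k,
      chist (run e1 t) k = chist (run e2 t) k &
      (cstat (run e1 t) k = None -> trans e1 t = trans e2 t)].
Proof.
move=> p1 p2; elim: t => [|t IH] // pr1 pr2.
have pre e : prefix (trans e t.+1) r -> prefix (trans e t) r.
  by rewrite transcriptS => /catl_prefix.
have [stat12 hist12 tr12] := IH (pre _ pr1) (pre _ pr2).
have acts12 : acts e1 t k = acts e2 t k by rewrite /cacts stat12 hist12 !qry_gs p1 p2.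
have stat12' : cstat (run e1 t.+1) k = cstat (run e2 t.+1) k by rewrite /= acts12 stat12.
have bcast12 : cstat (run e1 t.+1) k = None ->
    cbcast tau (ginst (game_s n) e1) w t = cbcast tau (ginst (game_s n) e2) w t.
  move=> run1; have run2 : cstat (run e2 t.+1) k = None by rewrite -stat12'.
  apply: (paired_bcast_eq p1 p2 run1 run2 acts12 hist12 _ pr1 pr2).
  exact/tr12/crun_running_pred.
split => // [|run1].
- move: bcast12; rewrite /= !gmsgs_gs_paired ?game_s_neq // -acts12 -stat12 hist12 /cbcast.
  by case: (acts e1 t k) => [[?|??]|] //=; case: (cstat (run e1 t) k) => [?|] // /(_ erefl) ->.
- by rewrite !transcriptS (bcast12 run1) (tr12 (crun_running_pred run1)).
Qed.

Lemma paired_final_eq e1 e2 k T1 T2 r : in_pair e1 k -> in_pair e2 k ->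
  terminated (run e1 T1) -> terminated (run e2 T2) ->
  prefix (trans e1 T1) r -> prefix (trans e2 T2) r ->
  cstat (run e1 T1) k = cstat (run e2 T2) k.
Proof.
move=> p1 p2 term1 term2 pr1 pr2.
have [run1 tr1] := crun_terminated_stable term1 T2.
have [run2 tr2] := crun_terminated_stable term2 T1.
rewrite addnC in run1 tr1; rewrite -tr1 in pr1; rewrite -tr2 in pr2.
by rewrite -run1 -run2; case: (paired_view_eq p1 p2 pr1 pr2).
Qed.

(* the output of k on any padding of the transcript of an instance where k is
   paired; well defined by paired_final_eq *)
Definition output_guess (b : nat) (k : 'I_n) : {ffun b.-tuple bool -> bool} :=
  [ffun r : b.-tuple bool => `[< exists e T, [/\ in_pair e k, terminated (run e T),
      prefix (trans e T) r & cstat (run e T) k = Some (Some [:: true])] >]].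

Lemma output_guessE b e T k (r : b.-tuple bool) o :
  in_pair e k -> terminated (run e T) -> prefix (trans e T) r ->
  cstat (run e T) k = Some (Some [:: o]) -> output_guess b k r = o.
Proof.
move=> pk termT prT outk; rewrite ffunE; case: o outk => outk.
- by apply/asboolP; exists e, T.
- apply/asboolF => -[e' [T' [pk' termT' prT' out']]].
  by have := paired_final_eq pk' pk termT' termT prT' prT; rewrite out' outk.
Qed.

Hypothesis winning : cwins tau (game_s n).

Lemma card_players_le b :
  (forall e T, ccost tau (ginst (game_s n) e) w T <= b) -> n <= 2 ^ 2 ^ b.
Proof.
move=> cost_le; have guess_neq (i j : 'I_n) : i < j -> output_guess b i != output_guess b j.
  move=> lt_ij; pose e : gidx (game_s n) := exist _ (i, j) lt_ij.
  have [T [termT wonT]] := winning e w.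
  have [bo [out_i out_j]] := game_s_won_outputs wonT.
  have size_tr : size (trans e T) <= b by rewrite -ccost_transcript.
  have size_pad : size (trans e T ++ nseq (b - size (trans e T)) false) == b.
    by rewrite size_cat size_nseq subnKC.
  have pr : prefix (trans e T) (Tuple size_pad) by exact: prefix_prefix.
  have pair_i : in_pair e i by rewrite /paired eqxx.
  have pair_j : in_pair e j by rewrite /paired eqxx orbT.
  apply/eqP => /ffunP /(_ (Tuple size_pad)).
  rewrite (output_guessE pair_i termT pr out_i) (output_guessE pair_j termT pr out_j).
  by case: (bo).
have inj_guess : injective (output_guess b).
  move=> i j eq_ij; case: (ltngtP i j) => [/guess_neq|/guess_neq|/val_inj //].
    by rewrite eq_ij eqxx.
  by rewrite eq_ij eqxx.
by have := leq_card _ inj_guess; rewrite card_ord card_ffun card_tuple card_bool.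
Qed.

End ClassicalLowerBound.

Section Log2.
Local Open Scope ring_scope.
Local Notation R := Rdefinitions.R.

Lemma log2_le_nat (y : R) (k : nat) : 0 < y -> y <= 2 ^+ k -> log2 y <= k%:R.
Proof.
move=> y_gt0 y_le; have ln2_gt0 : 0 < ln (2 : R) by rewrite ln_gt0 // ltr1n.
by rewrite /log2 ler_pdivrMr // mulr_natl -lnXn // ler_ln // posrE exprn_gt0.
Qed.

Lemma log2_log2_le (m b : nat) : (1 < m)%N -> (m <= 2 ^ 2 ^ b)%N ->
  log2 (log2 m%:R) <= b%:R :> R.
Proof.
move=> m_gt1 m_le; apply: log2_le_nat.
  by rewrite /log2 divr_gt0 // ln_gt0 // ltr1n.
by rewrite -natrX; apply: log2_le_nat; rewrite ?ltr0n ?(ltnW m_gt1) // -natrX ler_nat.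
Qed.

End Log2.

Lemma Bcl_game_s_ge n : (1 < n)%N ->
  ((log2 (log2 n%:R))%:E <= Bcl (game_s n))%E.
Proof.
move=> n_gt1; apply/ereal_infP => _ [tau [win sd] <-].
pose w := @cs_omega0 n tau.
pose e0 : gidx (game_s n) := exist _ (Ordinal (ltnW n_gt1), Ordinal n_gt1) isT.
have cost_le e T : ((ccost tau (ginst (game_s n) e) w T)%:R%:E <= Bc tau (game_s n))%E.
  by apply: ereal_sup_ubound; exists e, w, T.
case E: (Bc tau (game_s n)) => [M| |]; last 2 first.
- exact: leey.
- by have := cost_le e0 0%N; rewrite E.
have M_ge0 : (0 <= M)%R by have := cost_le e0 0%N; rewrite E lee_fin; apply: le_trans.
have cost_trunc e T : (ccost tau (ginst (game_s n) e) w T <= Num.truncn M)%N.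
  by rewrite truncn_ge_nat //; have := cost_le e T; rewrite E lee_fin.
rewrite lee_fin (le_trans (log2_log2_le n_gt1 (card_players_le sd win cost_trunc))) //.
by rewrite truncn_le.
Qed.

Local Open Scope ring_scope.

Definition bit_of (a : 'I_2) : bool := a == ord_max.

Lemma bidxK : cancel bidx bit_of. Proof. by case. Qed.

Lemma ord2P (a : 'I_2) : a = bidx false \/ a = bidx true.
Proof. by case: a => [[|[|m]] lt_a2]; [left|right|]; try apply: val_inj. Qed.

Definition kraus_apply (K : 'M[algC]_2) (v : bool -> algC) : bool -> algC :=
  fun x => \sum_(y : bool) K (bidx x) (bidx y) * v y.

Definition basis_vec (z : bool) : bool -> algC := fun x => (x == z)%:R.

Definition phase_vec (w : algC) : bool -> algC := fun x => if x then w else 1.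

(* u u^* / 2: the projector onto u / sqrt 2 when u = phase_vec w with |w| = 1 *)
Definition half_proj (u : bool -> algC) : 'M[algC]_2 :=
  \matrix_(a, b) (2^-1 * u (bit_of a) * (u (bit_of b))^*).

Definition phase_meas (w : algC) : seq 'M[algC]_2 :=
  [:: half_proj (phase_vec w); half_proj (phase_vec (- w))].

Lemma kraus_apply1 v : kraus_apply 1%:M v = v.
Proof.
apply: boolp.funext => x; rewrite /kraus_apply big_bool /= !mxE.
by case: x; rewrite /= ?mul1r ?mul0r ?addr0 ?add0r.
Qed.

Lemma kraus_apply0 v : kraus_apply 0 v = fun _ => 0.
Proof. by apply: boolp.funext => x; rewrite /kraus_apply big1 // => y _; rewrite mxE mul0r. Qed.

Lemma kraus_apply_vec0 K : kraus_apply K (fun _ => 0) = fun _ => 0.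
Proof. by apply: boolp.funext => x; rewrite /kraus_apply big1 // => y _; rewrite mulr0. Qed.

Lemma kraus_applyZ K v s : kraus_apply K (fun x => v x * s) = fun x => kraus_apply K v x * s.
Proof.
apply: boolp.funext => x; rewrite /kraus_apply big_distrl /=.
by apply: eq_bigr => y _; rewrite mulrA.
Qed.

Lemma half_proj_basis u z x : kraus_apply (half_proj u) (basis_vec z) x = 2^-1 * u x * (u z)^*.
Proof.
rewrite /kraus_apply big_bool /= !mxE !bidxK /basis_vec.
by case: z; rewrite /= ?mulr1 ?mulr0 ?addr0 ?add0r.
Qed.

Lemma half_proj_adj u : (map_mx Num.conj (half_proj u))^T = half_proj u.
Proof. by apply/matrixP => a b; rewrite !mxE !rmorphM /= fmorphV rmorph_nat conjCK; ring. Qed.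

Lemma half_proj_idem w : w^* * w = 1 ->
  half_proj (phase_vec w) *m half_proj (phase_vec w) = half_proj (phase_vec w).
Proof.
move=> unit_w; apply/matrixP => a b; rewrite !mxE big_ord_recr big_ord_recl big_ord0 /=.
rewrite !mxE /phase_vec /=.
set ua := (if bit_of a then w else 1); set ub := (if bit_of b then w else 1).
have -> : 2^-1 * ua * w^* * (2^-1 * w * ub^*) =
          2^-1 * ua * (2^-1 * ub^*) * (w^* * w) by ring.
have nz2 : (2 : algC) != 0 by rewrite pnatr_eq0.
by rewrite unit_w rmorph1; field.
Qed.

Lemma half_proj_sum w : w^* * w = 1 ->
  half_proj (phase_vec w) + half_proj (phase_vec (- w)) = 1%:M.
Proof.
move=> unit_w; have nz2 : (2 : algC) != 0 by rewrite pnatr_eq0.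
apply/matrixP => a b; rewrite !mxE /phase_vec.
case: (ord2P a) => ->; case: (ord2P b) => ->; rewrite !bidxK /= ?rmorph1 ?rmorphN.
- by field.
- by ring.
- by ring.
- have -> : 2^-1 * w * w^* + 2^-1 * - w * - w^* = 2^-1 * 2 * (w^* * w) by ring.
  by rewrite unit_w mulr1 mulVf.
Qed.

Lemma phase_meas_instrument w : w^* * w = 1 -> is_instrument (phase_meas w).
Proof.
move=> unit_w; rewrite /is_instrument /phase_meas !big_cons big_nil addr0 !half_proj_adj.
rewrite half_proj_idem // half_proj_idem ?half_proj_sum //.
by rewrite rmorphN mulrN mulNr opprK.
Qed.

Lemma id_instrument : is_instrument [:: 1%:M].
Proof.
rewrite /is_instrument big_cons big_nil addr0 mulmx1.
by apply/matrixP => a b; rewrite !mxE rmorph_nat eq_sym.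
Qed.

Definition prod_superpos n (c : algC) (V : bool -> 'I_n -> bool -> algC) : qstate n :=
  fun b => c * \sum_(z : bool) \prod_(k : 'I_n) V z k (b k).

Lemma apply_local_prod_superpos n K (i : 'I_n) c V :
  apply_local K i (prod_superpos c V) =
  prod_superpos c (fun z k => if k == i then kraus_apply K (V z k) else V z k).
Proof.
apply: boolp.funext => b; rewrite /apply_local /prod_superpos.
pose rest z := \prod_(k | k != i) V z k (b k).
transitivity (\sum_(y : bool) \sum_(z : bool)
                 c * (K (bidx (b i)) (bidx y) * V z i y * rest z)).
  apply: eq_bigr => y _; rewrite mulrCA !big_distrr /=.
  apply: eq_bigr => z _; rewrite (bigD1 i) //= /upd ffunE eqxx !mulrA.
  by congr (_ * _); apply: eq_bigr => k nki; rewrite ffunE (negbTE nki).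
rewrite exchange_big big_distrr; apply: eq_bigr => z _.
rewrite (bigD1 i) //= eqxx /kraus_apply big_distrl /= big_distrr; apply: eq_bigr => y _.
by congr (c * (_ * _)); apply: eq_bigr => k nki; rewrite (negbTE nki).
Qed.

Lemma foldr_apply_local_prod_superpos n (r : 'I_n -> bool) (K : 'I_n -> 'M[algC]_2)
    c V (s : seq 'I_n) : uniq s ->
  foldr (fun i phi => if r i then apply_local (K i) i phi else phi) (prod_superpos c V) s =
  prod_superpos c (fun z k => if (k \in s) && r k then kraus_apply (K k) (V z k) else V z k).
Proof.
elim: s => [_|a s IH /andP [a_s us]] /=; first by [].
rewrite IH //; case ra: (r a); rewrite ?apply_local_prod_superpos;
  congr prod_superpos; apply: boolp.funext => z; apply: boolp.funext => k;
  rewrite in_cons; case: (eqVneq k a) => [->|] //=; by rewrite (negbTE a_s) ra.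
Qed.

Lemma prod_nat_bool (I : finType) (P : pred I) :
  \prod_(k : I) (P k)%:R = [forall k, P k]%:R :> algC.
Proof.
case: (boolP [forall k, P k]) => [/forallP allP | /forallPn [k nPk]].
- by rewrite big1 // => k _; rewrite allP.
- by rewrite (bigD1 k) //= (negbTE nPk) mul0r.
Qed.

Lemma ghz_prod_superpos n : (0 < n)%N ->
  ghz n = prod_superpos (sqrtC 2)^-1 (fun z (_ : 'I_n) => basis_vec z).
Proof.
move=> n_gt0; apply: boolp.funext => b.
rewrite /ghz /prod_superpos big_bool /= /basis_vec !prod_nat_bool.
under eq_forallb => k do rewrite eqb_id.
case: (boolP [forall k, b k == false]) => [/forallP all0 | _];
case: (boolP [forall k, b k]) => [/forallP all1 | _] /=.
- by have := all0 (Ordinal n_gt0); rewrite all1.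
- by rewrite add0r mulr1.
- by rewrite addr0 mulr1.
- by rewrite addr0 mulr0.
Qed.

Definition branch_scaled (v : bool -> bool -> algC) (s : bool -> algC) : Prop :=
  forall z x, v z x = v false x * s z.

Lemma branch_scaled_kraus K v s :
  branch_scaled v s -> branch_scaled (fun z => kraus_apply K (v z)) s.
Proof.
move=> vs z x /=.
have -> : v z = fun y => v false y * s z by apply: boolp.funext => y; apply: vs.
by rewrite kraus_applyZ.
Qed.

Lemma branch_scaled_phase_meas w m :
  branch_scaled (fun z => kraus_apply (nth 0 (phase_meas w) m) (basis_vec z))
                (fun z => (phase_vec (if m == 1%N then - w else w) z)^*).
Proof.
case: m => [|[|m]] z x /=; rewrite ?half_proj_basis ?nth_nil ?kraus_apply0 ?mul0r //.
all: by rewrite /phase_vec /= rmorph1 mulr1.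
Qed.

Lemma prod_superpos_eq0 n c (V : bool -> 'I_n -> bool -> algC) s :
  (forall k, branch_scaled (V^~ k) (s k)) -> \sum_(z : bool) \prod_(k < n) s k z = 0 ->
  forall b, prod_superpos c V b = 0.
Proof.
move=> Vs sum0 b; rewrite /prod_superpos.
have -> : \sum_z \prod_(k < n) V z k (b k) =
          \prod_(k < n) V false k (b k) * \sum_z \prod_(k < n) s k z.
  rewrite big_distrr; apply: eq_bigr => z _.
  by rewrite (eq_bigr (fun k => V false k (b k) * s k z)) ?big_split // => k _; apply: Vs.
by rewrite sum0 !mulr0.
Qed.

Lemma prod_sign_xor (T : Type) (g : T -> bool) (s : seq T) :
  \prod_(k <- s) (if g k then -1 else 1) =
  (if foldr (fun k acc => xorb (g k) acc) false s then -1 else 1 : algC).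
Proof.
elim: s => [|a s IH]; first by rewrite big_nil.
by rewrite big_cons IH /=; case: (g a); case: (foldr _ _ _); rewrite /= ?mul1r ?mulrNN ?mulr1.
Qed.

(* Helpers (query 1) measure in the basis |0> +- |1> and tell their group the
   outcome; the first helper of that group broadcasts the parity p of these
   outcomes, which leaves the pair in |00> + (-1)^p |11>; both paired players
   then measure in the basis |0> +- w |1>, with w = 1 if p is odd and w = i
   otherwise, and output their outcomes, which are then always different. *)
Section GHZStrategy.
Variable n : nat.

Definition parity (l : seq ('I_n * bits)) : bool :=
  foldr (fun m acc => xorb (head false m.2) acc) false l.

Definition first_msgs (h : seq (inp n)) : seq ('I_n * bits) := (head ([::], [::]) h).1.

Definition leads (k : 'I_n) (h : seq (inp n)) : bool :=
  head k [seq m.1 | m <- first_msgs h] == k.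

Definition last_bcast_bit (h : seq (inp n)) : bool := head false (last ([::], [::]) h).2.

Definition is_helper (q : bits) : bool := q == [:: true].

Definition last_outcome (o : seq nat) : bool := last 0%N o == 1%N.

Definition ghz_instr (k : 'I_n) (s : unit) (q : bits) (h : seq (inp n)) (o : seq nat) :
    seq 'M[algC]_2 :=
  if is_helper q then (if size h == 0%N then phase_meas 1 else [:: 1%:M])
  else if size h == 2%N then phase_meas (if last_bcast_bit h then 1 else 'i)
  else [:: 1%:M].

Lemma ghz_instr_instrument k s q h o : is_instrument (ghz_instr k s q h o).
Proof.
have unit1 : (1 : algC)^* * 1 = 1 by rewrite rmorph1 mulr1.
have uniti : ('i : algC)^* * 'i = 1 by rewrite conjCi mulNr -expr2 sqrCi opprK.
rewrite /ghz_instr; case: ifP => _; case: ifP => _; try case: ifP => _;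
  by [exact: id_instrument | exact: phase_meas_instrument].
Qed.

Definition ghz_act (k : 'I_n) (s : unit) (q : bits) (h : seq (inp n)) (o : seq nat) : action :=
  if is_helper q then
    (if size h == 0%N then Send false [:: last_outcome o]
     else if (size h == 1%N) && leads k h then Send true [:: parity (first_msgs h)]
     else Halt None)
  else if size h == 2%N then Halt (Some [:: last_outcome o]) else Send false [::].

Definition ghz_strategy : qstrat n :=
  @QStrat n unit tt unit (fun _ _ => tt) ghz_instr ghz_instr_instrument ghz_act.

End GHZStrategy.

Lemma pmap_if_Some (T U : Type) (P : pred T) (g : T -> U) (s : seq T) :
  pmap (fun p => if P p then Some (g p) else None) s = [seq g p | p <- s & P p].
Proof. by elim: s => //= a s IH; case: (P a); rewrite /= IH. Qed.

Lemma flatten_if_eq (T : eqType) (U : Type) (s : seq T) d (u : seq U) :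
  uniq s -> d \in s -> flatten [seq if p == d then u else [::] | p <- s] = u.
Proof.
elim: s => //= a s IH /andP [a_s us]; rewrite in_cons.
case: (eqVneq a d) => [<- _|_] /=; last by apply: IH.
rewrite -[RHS]cats0; congr (_ ++ _).
elim: s a_s {IH us} => //= b s IH; rewrite in_cons negb_or => /andP [ab a_s].
by rewrite eq_sym (negbTE ab) IH.
Qed.

Lemma cstat_cfg_next n (x : instance n) c a k :
  cstat (cfg_next x c a) k = if a k is Some (Halt o) then Some o else cstat c k.
Proof. by []. Qed.

Lemma chist_cfg_next n (x : instance n) c a k : chist (cfg_next x c a) k =
  if (if a k is Some (Halt o) then Some o else cstat c k) is None
  then rcons (chist c k) (gmsgs x a k, bbar a) else chist c k.
Proof. by []. Qed.

Section GHZRun.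
Variables (n : nat) (i j : 'I_n) (f : nat -> 'I_n -> nat).
Hypotheses (neq_ij : i != j) (n_gt2 : (2 < n)%N).

Let x := gs_instance i j.
Local Notation pair k := (paired i j k).
Local Notation run t := (qrun (ghz_strategy n) (ghz n) x tt f t).
Local Notation acts t := (qacts (ghz_strategy n) x tt f t (run t)).

Lemma is_helper_qry k : is_helper (gs_query (gs_group i j k)) = ~~ pair k.
Proof. by have := qry_gs i j k; rewrite /qry /= => ->; case: (pair k). Qed.

Definition acts_at0 : 'I_n -> option action :=
  fun p => Some (Send false (if pair p then [::] else [:: f 0%N p == 1%N])).

Definition helper_msgs : seq ('I_n * bits) :=
  [seq (p, [:: f 0%N p == 1%N]) | p <- enum 'I_n & ~~ pair p].

Lemma acts0E : acts 0 = acts_at0.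
Proof.
apply: boolp.funext => p; rewrite /qacts /= /ghz_act is_helper_qry /acts_at0.
by case: (pair p).
Qed.

Lemma bbar_acts_at0 : bbar acts_at0 = [::].
Proof. by rewrite /bbar /acts_at0; elim: (enum 'I_n) => //= a s ->. Qed.

Lemma gmsgs_acts_at0 k : gmsgs x acts_at0 k = if pair k then [:: (k, [::])] else helper_msgs.
Proof.
case pk: (pair k); first by rewrite gmsgs_gs_paired // /acts_at0 pk.
rewrite gmsgs_gs_helper ?pk // /helper_msgs -pmap_if_Some.
by congr pmap; apply: boolp.funext => p /=; rewrite /acts_at0; case: (pair p).
Qed.

Lemma cstat_run1 k : cstat (qc (run 1)) k = None.
Proof. by rewrite /= /ghz_act is_helper_qry; case: (pair k). Qed.

Lemma chist_run1 k :
  chist (qc (run 1)) k = [:: (if pair k then [:: (k, [::])] else helper_msgs, [::])].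
Proof.
have -> : qc (run 1) = cfg_next x cfg0 acts_at0 by rewrite -acts0E.
by rewrite /= bbar_acts_at0 gmsgs_acts_at0.
Qed.

Lemma exists_helper : exists p, ~~ pair p.
Proof.
apply/fintype.existsP; apply: contraTT n_gt2 => /fintype.existsPn all_pair; rewrite -leqNgt.
have sub : [set: 'I_n] \subset [set i; j].
  by apply/fintype.subsetP => p _; rewrite !inE; have := all_pair p; rewrite negbK.
have := subset_leq_card sub; rewrite cardsT card_ord => /leq_trans; apply.
by rewrite cards2; case: (i != j).
Qed.

Lemma helper_msgs_neq0 : helper_msgs != [::].
Proof.
have [p hp] := exists_helper; apply/eqP => msgs0.
have : (p, [:: f 0%N p == 1%N]) \in helper_msgs by rewrite map_f // mem_filter hp mem_enum.
by rewrite msgs0.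
Qed.

Definition leader : 'I_n := head i [seq m.1 | m <- helper_msgs].

Definition helper_parity : bool := parity helper_msgs.

Lemma leader_helper : ~~ pair leader.
Proof.
have := helper_msgs_neq0; rewrite /leader /helper_msgs.
case E: [seq p <- enum 'I_n | ~~ pair p] => [|a s] //= _.
have : a \in [seq p <- enum 'I_n | ~~ pair p] by rewrite E mem_head.
by rewrite mem_filter => /andP [].
Qed.

Definition acts_at1 : 'I_n -> option action :=
  fun p => Some (if pair p then Send false [::]
                 else if p == leader then Send true [:: helper_parity] else Halt None).

Lemma acts1E : acts 1 = acts_at1.
Proof.
apply: boolp.funext => p; rewrite /qacts /qrunning cstat_run1 chist_run1 /= /ghz_act.
rewrite /qry /= is_helper_qry /acts_at1; case: (pair p) => //=.
rewrite /leads /first_msgs /leader /helper_parity /=.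
by have := helper_msgs_neq0; case: helper_msgs => [|m s] //= _; rewrite eq_sym.
Qed.

Lemma bbar_acts_at1 : bbar acts_at1 = [:: helper_parity].
Proof.
rewrite /bbar -[RHS](@flatten_if_eq _ _ _ leader _ (enum_uniq 'I_n) (mem_enum _ leader)).
congr flatten; apply: eq_map => p; rewrite /bcast_part /acts_at1.
case: (eqVneq p leader) => [->|_]; first by rewrite (negbTE leader_helper).
by case: (pair p).
Qed.

Lemma qc_run2 : qc (run 2) = cfg_next x (qc (run 1)) acts_at1.
Proof. by rewrite -acts1E. Qed.

Lemma cstat_run2 k : cstat (qc (run 2)) k = if pair k || (k == leader) then None else Some None.
Proof.
by rewrite qc_run2 cstat_cfg_next /acts_at1 cstat_run1; case: (pair k); case: (k == leader).
Qed.

Lemma chist_run2 k : pair k || (k == leader) ->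
  chist (qc (run 2)) k = rcons (chist (qc (run 1)) k) (gmsgs x acts_at1 k, [:: helper_parity]).
Proof.
rewrite qc_run2 chist_cfg_next bbar_acts_at1 {1}/acts_at1 cstat_run1.
by case: (pair k) => //= ->.
Qed.

Lemma size_chist_run2 k : pair k || (k == leader) -> size (chist (qc (run 2)) k) = 2%N.
Proof. by move=> active; rewrite chist_run2 // size_rcons chist_run1. Qed.

Lemma qouts_run2 k : qouts (run 2) k = [:: f 0%N k; f 1%N k].
Proof. by rewrite /= /qouts_next /qrunning cstat_run1. Qed.

Definition acts_at2 : 'I_n -> option action :=
  fun p => if pair p || (p == leader)
           then Some (Halt (if pair p then Some [:: f 2%N p == 1%N] else None))
           else None.

Lemma acts2E : acts 2 = acts_at2.
Proof.
apply: boolp.funext => p; rewrite /qacts /qrunning cstat_run2 /acts_at2.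
case active: (pair p || (p == leader)) => //.
rewrite /qouts_next /qrunning cstat_run2 active qouts_run2.
change (qs_act (ghz_strategy n)) with (@ghz_act n); rewrite /ghz_act is_helper_qry.
by rewrite size_chist_run2 //; case: (pair p).
Qed.

Lemma cstat_run3 k :
  cstat (qc (run 3)) k = Some (if pair k then Some [:: f 2%N k == 1%N] else None).
Proof.
have -> : qc (run 3) = cfg_next x (qc (run 2)) acts_at2 by rewrite -acts2E.
by rewrite cstat_cfg_next /acts_at2 cstat_run2; case: (pair k); case: (k == leader).
Qed.

Lemma cstat_run_ge3 t k : (3 <= t)%N ->
  cstat (qc (run t)) k = Some (if pair k then Some [:: f 2%N k == 1%N] else None).
Proof.
elim: t => // t IH; rewrite leq_eqVlt => /orP [/eqP <-|lt3t]; first exact: cstat_run3.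
by rewrite cstat_cfg_next /qacts /qrunning IH.
Qed.

Lemma qbcastE t :
  qbcast (ghz_strategy n) (ghz n) x tt f t = if t == 1%N then [:: helper_parity] else [::].
Proof.
rewrite /qbcast; case: t => [|[|[|t]]].
- by rewrite acts0E bbar_acts_at0.
- by rewrite acts1E bbar_acts_at1.
- by rewrite acts2E /bbar /bcast_part /acts_at2; elim: (enum 'I_n) => //= a s ->; case: ifP.
- have -> : acts t.+3 = fun _ => None.
    by apply: boolp.funext => p; rewrite /qacts /qrunning cstat_run_ge3.
  exact: bbar_none.
Qed.

Definition kraus_at0 k := nth 0 (if pair k then [:: 1%:M] else phase_meas 1) (f 0%N k).
Definition kraus_at1 k := nth 0 [:: (1%:M : 'M[algC]_2)] (f 1%N k).
Definition pair_phase : algC := if helper_parity then 1 else 'i.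
Definition kraus_at2 k := nth 0 (if pair k then phase_meas pair_phase else [:: 1%:M]) (f 2%N k).

Lemma qpsiS_prod_superpos t c V : qpsi (run t) = prod_superpos c V ->
  qpsi (run t.+1) = prod_superpos c (fun z k => if qrunning (run t) k
    then kraus_apply (qkraus (ghz_strategy n) x tt f t (run t) k) (V z k) else V z k).
Proof.
move=> psi_t; rewrite /= /qpsi_next psi_t foldr_apply_local_prod_superpos ?enum_uniq //.
by congr prod_superpos; apply: boolp.funext => z; apply: boolp.funext => k; rewrite mem_enum.
Qed.

Lemma qpsi_run1 :
  qpsi (run 1) =
  prod_superpos (sqrtC 2)^-1 (fun z k => kraus_apply (kraus_at0 k) (basis_vec z)).
Proof.
rewrite (@qpsiS_prod_superpos 0 _ _ (ghz_prod_superpos (ltnW (ltnW n_gt2)))).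
congr prod_superpos; apply: boolp.funext => z; apply: boolp.funext => k.
rewrite /qkraus; change (qs_instr (ghz_strategy n)) with (@ghz_instr n).
by rewrite /ghz_instr is_helper_qry /kraus_at0 /=; case: (pair k).
Qed.

Lemma qpsi_run2 : qpsi (run 2) = prod_superpos (sqrtC 2)^-1
  (fun z k => kraus_apply (kraus_at1 k) (kraus_apply (kraus_at0 k) (basis_vec z))).
Proof.
rewrite (qpsiS_prod_superpos qpsi_run1); congr prod_superpos.
apply: boolp.funext => z; apply: boolp.funext => k.
rewrite /qrunning cstat_run1 /qkraus chist_run1.
change (qs_instr (ghz_strategy n)) with (@ghz_instr n).
by rewrite /ghz_instr is_helper_qry /kraus_at1 /=; case: (pair k).
Qed.

Definition final_factor z k : bool -> algC :=
  let v := kraus_apply (kraus_at1 k) (kraus_apply (kraus_at0 k) (basis_vec z)) in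
  if pair k || (k == leader) then kraus_apply (kraus_at2 k) v else v.

Lemma qpsi_run3 : qpsi (run 3) = prod_superpos (sqrtC 2)^-1 final_factor.
Proof.
rewrite (qpsiS_prod_superpos qpsi_run2); congr prod_superpos.
apply: boolp.funext => z; apply: boolp.funext => k.
rewrite /qrunning cstat_run2 /final_factor; case active: (pair k || (k == leader)) => //.
rewrite /qkraus; change (qs_instr (ghz_strategy n)) with (@ghz_instr n).
rewrite /ghz_instr is_helper_qry size_chist_run2 // /kraus_at2 /pair_phase.
case pk: (pair k) => //.
by rewrite /last_bcast_bit chist_run2 ?pk // last_rcons; case: helper_parity.
Qed.

Definition final_scale k : bool -> algC :=
  if pair k then fun z => (phase_vec (if f 2%N k == 1%N then - pair_phase else pair_phase) z)^*
  else fun z => (phase_vec (if f 0%N k == 1%N then -1 else 1) z)^*.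

Lemma final_factor_scaled k : branch_scaled (final_factor^~ k) (final_scale k).
Proof.
rewrite /final_factor /final_scale /kraus_at0 /kraus_at1 /kraus_at2.
case: (pair k) => /=; last first.
  by case: (k == leader); do ?[exact: branch_scaled_phase_meas | apply: branch_scaled_kraus].
have nth_id m v : kraus_apply (nth 0 [:: 1%:M] m) v = if m == 0%N then v else fun _ => 0.
  by case: m => [|m] /=; rewrite ?kraus_apply1 ?nth_nil ?kraus_apply0.
move=> z y; rewrite !nth_id.
case: (f 0%N k == 0%N); case: (f 1%N k == 0%N); rewrite ?kraus_apply_vec0 ?mul0r //.
exact: branch_scaled_phase_meas.
Qed.

Lemma prod_helpers_scale :
  \prod_(k | (k != i) && (k != j)) final_scale k true = if helper_parity then -1 else 1.
Proof.
rewrite /helper_parity /parity /helper_msgs foldr_map -prod_sign_xor.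
rewrite big_filter big_enum_cond; apply: eq_big => [k|k]; first by rewrite /paired negb_or.
move=> /andP [ki kj]; rewrite /final_scale /paired (negbTE ki) (negbTE kj) /=.
by case: (f 0%N k == 1%N); rewrite ?rmorphN rmorph1.
Qed.

Lemma pair_i : pair i. Proof. by rewrite /paired eqxx. Qed.
Lemma pair_j : pair j. Proof. by rewrite /paired eqxx orbT. Qed.

(* the phase pair_phase is chosen so that equal outcomes interfere destructively *)
Lemma final_scale_sum0 : (f 2%N i == 1%N) = (f 2%N j == 1%N) ->
  \sum_(z : bool) \prod_(k < n) final_scale k z = 0.
Proof.
move=> same_out; rewrite big_bool /=.
have -> : \prod_(k < n) final_scale k false = 1.
  by apply: big1 => k _; rewrite /final_scale; case: (pair k); rewrite /phase_vec rmorph1.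
rewrite (bigD1 i) // (bigD1 j) 1?eq_sym //= prod_helpers_scale.
rewrite /final_scale pair_i pair_j /phase_vec -same_out /pair_phase.
case: helper_parity; case: (f 2%N i == 1%N);
  by rewrite ?rmorphN ?rmorph1 /= ?conjCi ?opprK ?mulr1 ?mulrNN ?mulN1r ?mul1r
             -?expr2 ?sqrCi ?addNr.
Qed.

Lemma qpsi_run3_eq0 : (f 2%N i == 1%N) = (f 2%N j == 1%N) -> ~ qpos (qpsi (run 3)).
Proof.
move=> same_out [b]; rewrite qpsi_run3.
by rewrite (prod_superpos_eq0 _ final_factor_scaled (final_scale_sum0 same_out)) eqxx.
Qed.

Lemma terminated_run3 : terminated (qc (run 3)).
Proof. by move=> k; rewrite cstat_run3. Qed.

Lemma group_output_run3 k : pair k ->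
  group_output x (qc (run 3)) (gs_group i j k) = [:: f 2%N k == 1%N].
Proof.
move=> pk; rewrite /group_output; case: pickP => [p /andP [gp _] | /(_ k)].
  have : gs_group i j p == gs_group i j k := gp.
  by rewrite gs_group_paired // => /eqP ->; rewrite cstat_run3 pk.
by rewrite eqxx cstat_run3 pk.
Qed.

Lemma group_output_run3_rest : group_output x (qc (run 3)) (@Ordinal 3 2 isT) = [::].
Proof.
rewrite /group_output; case: pickP => [p /andP [gp] | //].
rewrite cstat_run3; case pp: (pair p) => //= _; move: pp gp.
by rewrite /paired /= /gs_group; case: (p == i) => //= /eqP ->; rewrite eqxx.
Qed.

Lemma won_run3 : (f 2%N i == 1%N) != (f 2%N j == 1%N) -> won x (qc (run 3)).
Proof.
move=> diff_out; split.
  move=> p q gpq; rewrite !cstat_run3; case pp: (pair p); case pq: (pair q) => //= _ _.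
  by apply/eqP; rewrite -(gs_group_paired neq_ij p pq); apply/eqP.
have group_i : gs_group i j i = @Ordinal 3 0 isT by rewrite /gs_group eqxx.
have group_j : gs_group i j j = @Ordinal 3 1 isT.
  by rewrite /gs_group eq_sym (negbTE neq_ij) eqxx.
rewrite /= /gs_allowed -group_i -group_j (group_output_run3 pair_i).
rewrite (group_output_run3 pair_j) group_output_run3_rest.
by move: diff_out; case: (f 2%N i == 1%N); case: (f 2%N j == 1%N) => // _; [right | left].
Qed.

End GHZRun.

Section GHZStrategyWins.
Variable n : nat.
Hypothesis n_gt2 : (2 < n)%N.

Lemma ghz_qcost e g T :
  qcost (ghz_strategy n) (ghz n) (ginst (game_s n) e) tt g T = (1 < T)%N.
Proof.
elim: T => [|T IH]; first by rewrite /qcost big_ord0.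
rewrite /qcost big_ord_recr /= -/(qcost _ _ _ _ _ _) IH.
by rewrite (qbcastE g (game_s_neq e) n_gt2); case: T {IH} => [|[|T]].
Qed.

Lemma ghz_qselfdelim : qselfdelim (ghz_strategy n) (ghz n) (game_s n).
Proof.
move=> k t e1 e2 [] [] g1 g2 /= _ _ _ _ _ _ _ _ _.
rewrite (qbcastE g1 (game_s_neq e1) n_gt2) (qbcastE g2 (game_s_neq e2) n_gt2).
by case: (t == 1%N) => //; rewrite prefixE /= => /eqP [->].
Qed.

Lemma ghz_qwins : qwins (ghz_strategy n) (ghz n) (game_s n).
Proof.
move=> e [] g; exists 3%N; have neq := game_s_neq e.
case: (boolP ((g 2%N (sval e).1 == 1%N) == (g 2%N (sval e).2 == 1%N))) => [/eqP same | diff].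
- by left; apply: qpsi_run3_eq0 same.
- by right; split; [exact: terminated_run3 | exact: won_run3].
Qed.

Lemma Bqm_ghz_game_s_le1 : (Bqm (ghz n) (game_s n) <= 1%:E)%E.
Proof.
apply: ge_ereal_inf; exists (Bq (ghz_strategy n) (ghz n) (game_s n)).
  by exists (ghz_strategy n) => //; split; [exact: ghz_qwins | exact: ghz_qselfdelim].
apply: ge_ereal_sup => _ [e [[] [g [T [_ ->]]]]].
by rewrite lee_fin ghz_qcost lern1 leq_b1.
Qed.

End GHZStrategyWins.

Theorem lemma1 (n : nat) : (5 <= n)%N ->
  ((log2 (log2 (n%:R)))%:E <= Bcl (game_s n))%E /\
  (Bqm (ghz n) (game_s n) <= 1%:E)%E.
Proof.
move=> n_ge5; split; first exact/Bcl_game_s_ge/(leq_trans _ n_ge5).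
exact/Bqm_ghz_game_s_le1/(leq_trans _ n_ge5).
Qed.
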